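(* Let $\pi_0$ be a fixed policy and $\epsilon>0$. For a parameterized policy $\pi_\theta$ let $\rho=\rho_\theta(a|s)=\pi_\theta(a|s)/\pi_0(a|s)$ and $$J_{PPO}(\theta)=\mathbb{E}_{s\sim d_{\pi_0},a\sim\pi_0(\cdot|s)}\left[\min\{\mathrm{clip}(\rho,1-\epsilon,1+\epsilon)A_{\pi_0}(s,a),\ \rho A_{\pi_0}(s,a)\}\right].$$ Define $J'(\theta)=\mathbb{E}_{s\sim d_{\pi_0},a\sim\pi_0(\cdot|s)}[l'(\rho_\theta(a|s))]$, where, writing $A_{\pi_0}=A_{\pi_0}(s,a)$, $$l'(\rho)=\begin{cases}|A_{\pi_0}|\cdot|\rho-(1+\epsilon\,\mathrm{sign}(A_{\pi_0}))|,&[\rho-(1+\epsilon\,\mathrm{sign}(A_{\pi_0}))]\cdot A_{\pi_0}\le0,\\ 0,&\text{otherwise}.\end{cases}$$ Then optimizing (maximizing) $J_{PPO}(\theta)$ is equivalent to minimizing $J'(\theta)$.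
   Context: Infinite-horizon discounted MDP with discount $\gamma\in(0,1)$, initial distribution $d_0$; $d_{\pi}(s)=\sum_{t\ge0}\gamma^t\Pr(s_t=s)$ is the unnormalized discounted state visitation under policy $\pi$; $A_{\pi_0}=Q_{\pi_0}-V_{\pi_0}$ is the advantage function of $\pi_0$. $\mathrm{clip}(x,l,u)=\min(\max(x,l),u)$. *)

From HB Require Import structures.
From mathcomp Require Import all_boot all_order all_algebra.
From mathcomp Require Import all_classical all_reals all_analysis.
Set Implicit Arguments. Unset Strict Implicit. Unset Printing Implicit Defensive.
Import Order.TTheory GRing.Theory Num.Theory.
Import numFieldNormedType.Exports.
Local Open Scope ring_scope.

(* Finite MDP: states S, actions A (finite types), rewards r s a,
   transition kernel P s a s' = Pr(s' | s, a), policies pi s a = pi(a|s). *)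
Section MDP.
Variables (R : realType) (S A : finType).

Definition is_policy (pi : S -> A -> R) : Prop :=
  (forall s a, 0 <= pi s a) /\ (forall s, \sum_(a : A) pi s a = 1).

Definition is_kernel (P : S -> A -> S -> R) : Prop :=
  (forall s a s', 0 <= P s a s') /\ (forall s a, \sum_(s' : S) P s a s' = 1).

Definition is_distr (mu : S -> R) : Prop :=
  (forall s, 0 <= mu s) /\ \sum_(s : S) mu s = 1.

Fixpoint state_dist (P : S -> A -> S -> R) (pi : S -> A -> R) (mu : S -> R)
    (t : nat) : S -> R :=
  match t with
  | 0 => mu
  | t'.+1 => fun s' => \sum_(s : S) state_dist P pi mu t' s *
                        \sum_(a : A) pi s a * P s a s'
  end.

Definition infsum (u : nat -> R) : R := limn (series u).

(* unnormalized discounted state visitation d_pi(s) = sum_t gamma^t Pr(s_t = s) *)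
Definition visitation (gamma : R) (P : S -> A -> S -> R) (pi : S -> A -> R)
    (d0 : S -> R) (s : S) : R :=
  infsum (fun t => gamma ^+ t * state_dist P pi d0 t s).

Definition delta (s0 : S) : S -> R := fun s => (s == s0)%:R.

Definition Vfun (gamma : R) (P : S -> A -> S -> R) (r : S -> A -> R)
    (pi : S -> A -> R) (s : S) : R :=
  infsum (fun t => gamma ^+ t *
    \sum_(s' : S) state_dist P pi (delta s) t s' *
       \sum_(a : A) pi s' a * r s' a).

Definition Qfun (gamma : R) (P : S -> A -> S -> R) (r : S -> A -> R)
    (pi : S -> A -> R) (s : S) (a : A) : R :=
  r s a + gamma * \sum_(s' : S) P s a s' * Vfun gamma P r pi s'.

Definition Afun (gamma : R) (P : S -> A -> S -> R) (r : S -> A -> R)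
    (pi : S -> A -> R) (s : S) (a : A) : R :=
  Qfun gamma P r pi s a - Vfun gamma P r pi s.

(* E_{s ~ d, a ~ pi(.|s)} [f s a]  (d unnormalized, as in the paper) *)
Definition expect_sa (d : S -> R) (pi : S -> A -> R) (f : S -> A -> R) : R :=
  \sum_(s : S) d s * \sum_(a : A) pi s a * f s a.

End MDP.

Definition clip (R : realType) (x l u : R) : R := Order.min (Order.max x l) u.

Definition ppo_obj (R : realType) (eps Adv rho : R) : R :=
  Order.min (clip rho (1 - eps) (1 + eps) * Adv) (rho * Adv).

Definition lprime (R : realType) (eps Adv rho : R) : R :=
  let c := 1 + eps * Num.sg Adv in
  if (rho - c) * Adv <= 0 then `|Adv| * `|rho - c| else 0.

Section Objectives.
Variables (R : realType) (S A : finType) (Theta : Type).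
Variables (gamma : R) (P : S -> A -> S -> R) (r : S -> A -> R) (d0 : S -> R).
Variables (pi0 : S -> A -> R) (pi : Theta -> S -> A -> R) (eps : R).

Definition rho (th : Theta) (s : S) (a : A) : R := pi th s a / pi0 s a.

Definition J_PPO (th : Theta) : R :=
  expect_sa (visitation gamma P pi0 d0) pi0
    (fun s a => ppo_obj eps (Afun gamma P r pi0 s a) (rho th s a)).

Definition J' (th : Theta) : R :=
  expect_sa (visitation gamma P pi0 d0) pi0
    (fun s a => lprime eps (Afun gamma P r pi0 s a) (rho th s a)).
End Objectives.

From HB Require Import structures.
From mathcomp Require Import all_boot all_order all_algebra.
From mathcomp Require Import all_classical all_reals all_analysis.
From mathcomp Require Import lra.
Import Order.TTheory GRing.Theory Num.Theory.
Local Open Scope ring_scope.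

(* For a fixed sample, the PPO surrogate and the loss l' add up to
   A (1 + eps sign A), which does not depend on rho: for A > 0 the surrogate is
   A min(rho, 1 + eps) and l' is the missing A (1 + eps - min(rho, 1 + eps)),
   symmetrically with max and 1 - eps for A < 0.  Averaging over d_pi0 and pi0,
   J_PPO + J' is independent of theta, so J_PPO orders parameters exactly as J'
   reverses them. *)

Section PointwiseLoss.
Variable R : realType.
Implicit Types (eps Adv rho x l u : R).

Lemma min_clip x l u : Order.min (clip x l u) x = Order.min x u.
Proof. by rewrite /clip minAC [Order.min (Order.max x l) x]minC maxKx. Qed.

Lemma max_clip x l u : l <= u -> Order.max (clip x l u) x = Order.max x l.
Proof.
move=> lu; rewrite /clip; have [xu|ux] := leP x u.
  by rewrite min_l ?ge_max ?xu // maxAC maxxx.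
have lx : l <= x := le_trans lu (ltW ux).
by rewrite (max_l lx) (min_r (ltW ux)) (max_r (ltW ux)).
Qed.

Lemma ppo_obj_gt0 eps Adv rho : 0 < Adv ->
  ppo_obj eps Adv rho = Adv * Order.min rho (1 + eps).
Proof. by move=> Apos; rewrite /ppo_obj -minr_pMl ?(ltW Apos) // min_clip mulrC. Qed.

Lemma ppo_obj_lt0 eps Adv rho : 0 <= eps -> Adv < 0 ->
  ppo_obj eps Adv rho = Adv * Order.max rho (1 - eps).
Proof.
move=> eps_ge0 Aneg; rewrite /ppo_obj -maxr_nMl ?(ltW Aneg) // mulrC max_clip //; lra.
Qed.

Lemma lprime_gt0 eps Adv rho : 0 < Adv ->
  lprime eps Adv rho = Adv * (1 + eps - Order.min rho (1 + eps)).
Proof.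
move=> Apos; rewrite /lprime gtr0_sg // mulr1 gtr0_norm // pmulr_lle0 // subr_le0.
have [rc|cr] := leP rho (1 + eps).
  by rewrite ler0_norm ?subr_le0 // opprB.
by rewrite subrr mulr0.
Qed.

Lemma lprime_lt0 eps Adv rho : Adv < 0 ->
  lprime eps Adv rho = Adv * (1 - eps - Order.max rho (1 - eps)).
Proof.
move=> Aneg; rewrite /lprime ltr0_sg // mulrN1 ltr0_norm // nmulr_lle0 // subr_ge0.
have [cr|rc] := leP (1 - eps) rho.
  by rewrite ger0_norm ?subr_ge0 // mulNr -mulrN opprB.
by rewrite subrr mulr0.
Qed.

Lemma ppo_obj_add_lprime eps Adv rho : 0 <= eps ->
  ppo_obj eps Adv rho + lprime eps Adv rho = Adv * (1 + eps * Num.sg Adv).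
Proof.
move=> eps_ge0; have [Aneg|Apos|->] := ltgtP Adv 0.
- by rewrite ppo_obj_lt0 // lprime_lt0 // ltr0_sg // mulrN1 -mulrDr addrC subrK.
- by rewrite ppo_obj_gt0 // lprime_gt0 // gtr0_sg // mulr1 -mulrDr addrC subrK.
- by rewrite /ppo_obj /lprime !(mulr0, mul0r, sgr0, normr0); case: ifP; rewrite minxx ?addr0.
Qed.
End PointwiseLoss.

Section ComplementaryObjectives.
Context {R : numDomainType} {T : Type} {f g : T -> R} {K : R}.
Hypothesis fgK : forall x, f x + g x = K.

Lemma le_complementary x y : (f x <= f y) = (g y <= g x).
Proof.
have gE z : g z = K - f z by rewrite -(fgK z) addrC addKr.
by rewrite !gE lerD2l lerN2.
Qed.

Lemma argmax_complementary x : (forall y, f y <= f x) <-> (forall y, g x <= g y).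
Proof. by split=> fx_max y; [rewrite -le_complementary | rewrite le_complementary]. Qed.

End ComplementaryObjectives.

Lemma expect_saD (R : realType) (S A : finType) (d : S -> R) (pi : S -> A -> R)
    (f g : S -> A -> R) :
  expect_sa d pi (fun s a => f s a + g s a) = expect_sa d pi f + expect_sa d pi g.
Proof.
rewrite /expect_sa -big_split /=; apply: eq_bigr => s _.
by rewrite -mulrDr -big_split /=; congr (_ * _); apply: eq_bigr => a _; rewrite mulrDr.
Qed.

Lemma J_PPO_add_J' {R : realType} {S A : finType} {Theta : Type}
    (gamma : R) (P : S -> A -> S -> R) (r : S -> A -> R) (d0 : S -> R)
    (pi0 : S -> A -> R) (pi : Theta -> S -> A -> R) (eps : R) (th : Theta) :
  0 <= eps ->
  J_PPO gamma P r d0 pi0 pi eps th + J' gamma P r d0 pi0 pi eps th =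
  expect_sa (visitation gamma P pi0 d0) pi0 (fun s a =>
    let Adv := Afun gamma P r pi0 s a in Adv * (1 + eps * Num.sg Adv)).
Proof.
move=> eps_ge0; rewrite /J_PPO /J' -expect_saD /expect_sa.
by apply: eq_bigr => s _; congr (_ * _); apply: eq_bigr => a _; rewrite ppo_obj_add_lprime.
Qed.

Theorem proposition1 (R : realType) (S A : finType) (Theta : Type)
  (gamma : R) (P : S -> A -> S -> R) (r : S -> A -> R) (d0 : S -> R)
  (pi0 : S -> A -> R) (pi : Theta -> S -> A -> R) (eps : R) :
  0 < gamma < 1 ->
  is_kernel P -> is_distr d0 ->
  is_policy pi0 -> (forall s a, 0 < pi0 s a) ->
  (forall th, is_policy (pi th)) ->
  0 < eps ->
  (forall th1 th2 : Theta,
     J_PPO gamma P r d0 pi0 pi eps th1 <= J_PPO gamma P r d0 pi0 pi eps th2 <->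
     J' gamma P r d0 pi0 pi eps th2 <= J' gamma P r d0 pi0 pi eps th1) /\
  (forall th : Theta,
     (forall th', J_PPO gamma P r d0 pi0 pi eps th' <= J_PPO gamma P r d0 pi0 pi eps th) <->
     (forall th', J' gamma P r d0 pi0 pi eps th <= J' gamma P r d0 pi0 pi eps th')).
Proof.
move=> _ _ _ _ _ _ /ltW eps_ge0.
have JK th := J_PPO_add_J' gamma P r d0 pi0 pi eps th eps_ge0.
split=> [th1 th2|th]; first by rewrite (le_complementary JK).
exact: (argmax_complementary JK th).
Qed.
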